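(* Let $G=G(n_1,n_2,p)$ where $1\ll n_1\leq n_2$. If $p=\frac{d}{\sqrt{n_1n_2}}$ for a constant $d<1$, then whp $G$ has no complex component.
   Context: $G(n_1,n_2,p)$ is the binomial random bipartite graph: each edge of $K_{n_1,n_2}$ is present independently with probability $p$. A component of a graph is complex if it contains more than one cycle. $1\ll n_1$ means $n_1\to\infty$; ''whp'' means with probability tending to $1$ as $n_1\to\infty$. *)

From HB Require Import structures.
From mathcomp Require Import all_boot all_order all_algebra.
From mathcomp Require Import all_classical all_reals all_analysis.
Set Implicit Arguments. Unset Strict Implicit. Unset Printing Implicit Defensive.
Import Order.TTheory GRing.Theory Num.Theory.

Local Open Scope ring_scope.

(* A spanning subgraph of K_{n1,n2} is given by its edge set
   E : {set 'I_n1 * 'I_n2}; the edge (i,j) joins vertex inl i (side 1)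
   to vertex inr j (side 2).  Vertex type: 'I_n1 + 'I_n2. *)
Definition bvert (n1 n2 : nat) : finType := ('I_n1 + 'I_n2)%type.

Definition badj (n1 n2 : nat) (E : {set 'I_n1 * 'I_n2}) : rel (bvert n1 n2) :=
  fun x y =>
    match x, y with
    | inl i, inr j => (i, j) \in E
    | inr j, inl i => (i, j) \in E
    | _, _ => false
    end.

Definition bdeg (n1 n2 : nat) (C : {set 'I_n1 * 'I_n2}) (x : bvert n1 n2) : nat :=
  #|[set y | badj C x y]|.

Definition incident (n1 n2 : nat) (C : {set 'I_n1 * 'I_n2}) (x : bvert n1 n2) : bool :=
  [exists y, badj C x y].

Definition is_cycle (n1 n2 : nat) (E C : {set 'I_n1 * 'I_n2}) : bool :=
  [&& C \subset E, C != finset.set0,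
      [forall x, incident C x ==> (bdeg C x == 2%N)] &
      [forall x, forall y, incident C x ==> incident C y ==> connect (badj C) x y]].

Definition in_component (n1 n2 : nat) (E C : {set 'I_n1 * 'I_n2})
    (v : bvert n1 n2) : bool :=
  [forall e, (e \in C) ==> connect (badj E) v (inl e.1)].

Definition has_complex_component (n1 n2 : nat) (E : {set 'I_n1 * 'I_n2}) : bool :=
  [exists v : bvert n1 n2, exists C1 : {set 'I_n1 * 'I_n2},
     exists C2 : {set 'I_n1 * 'I_n2},
     [&& C1 != C2, is_cycle E C1, is_cycle E C2,
         in_component E C1 v & in_component E C2 v]].

(* Probability, in G(n1,n2,p), of a property A of the edge set: each edge of
   K_{n1,n2} present independently with probability p. *)
Definition prob_Gnnp (R : realType) (n1 n2 : nat) (p : R)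
    (A : pred {set 'I_n1 * 'I_n2}) : R :=
  \sum_(E : {set 'I_n1 * 'I_n2} | A E)
     p ^+ #|E| * (1 - p) ^+ (n1 * n2 - #|E|)%N.

From HB Require Import structures.
From mathcomp Require Import all_boot all_order all_algebra.
From mathcomp Require Import all_classical all_reals all_analysis.
From mathcomp Require Import zify ring lra.
Import Order.TTheory GRing.Theory Num.Theory.
Import numFieldNormedType.Exports.
Set Implicit Arguments. Unset Strict Implicit. Unset Printing Implicit Defensive.

(* First moment.  Let C1 != C2 be cycles in one component and take a shortest
   path joining them.  In the union of the three every vertex has degree >= 2,
   so all neighbours of the endpoints of a longest path x_0 ... x_m of the union
   lie on the path.  They provide two chords, unless the path closes into a
   cycle; that cycle then carries a chord too, for otherwise it would be the
   whole union and C1 = C2.  So G contains m + 1 distinct vertices, alternating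
   between the two sides, that span m + 2 distinct edges.  For fixed m and
   starting side there are at most 2 (m + 1)^2 n1^a n2^c such configurations,
   where a + c = m + 1 and c <= a + 1 count the vertices on each side; each is
   present with probability p^(m+2) = (d^2 / (n1 n2))^((m+2)/2), so as n1 <= n2
   they contribute at most 2 (m + 1)^2 d^m / n1.  Summing over m and the two
   starting sides, a complex component has probability O(1 / n1). *)

Definition ring_adj (m k l : nat) : bool :=
  [|| l == k.+1, k == l.+1, (k == 0) && (l == m) | (k == m) && (l == 0)].

Lemma ring_adj_sym m : symmetric (ring_adj m).
Proof. by move=> k l; rewrite /ring_adj; apply/idP/idP; lia. Qed.

Definition cyc_adj (T : eqType) (s : seq T) (u w : T) : bool :=
  [&& u \in s, w \in s & ring_adj (size s).-1 (index u s) (index w s)].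

(* A theta path on the distinct vertices x_0, ..., x_m consists of the m + 2
   edges [theta_edge m tag i j t], t < m + 2: the path edges (t, t + 1), t < m,
   then the chords (0, i) and (m, j) if [tag], and (0, m) and (i, j) otherwise.
   [chords_ok] makes these m + 2 index pairs distinct. *)
Definition chords_ok (m : nat) (tag : bool) (i j : nat) : bool :=
  if tag then [&& 2 <= i <= m, j.+2 <= m & ~~ ((i == m) && (j == 0))]
  else [&& i < j <= m, j != i.+1 & ~~ ((i == 0) && (j == m))].

Definition theta_edge (m : nat) (tag : bool) (i j t : nat) : nat * nat :=
  if t < m then (t, t.+1)
  else if t == m then (if tag then (0, i) else (0, m))
  else if tag then (m, j) else (i, j).

Lemma theta_edge_le m tag i j t : chords_ok m tag i j -> t < m.+2 ->
  (theta_edge m tag i j t).1 <= m /\ (theta_edge m tag i j t).2 <= m.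
Proof.
rewrite /chords_ok /theta_edge; case: tag => /and3P [h1 h2 h3] ht;
  case: ifP => ?; try case: ifP => ?; split => /=; lia.
Qed.

Lemma chords_ok_le m tag i j : chords_ok m tag i j -> i <= m /\ j <= m.
Proof. by rewrite /chords_ok; case: tag => /and3P [? ? ?]; split; lia. Qed.

Lemma theta_edge_inj m tag i j t t' : chords_ok m tag i j -> t < m.+2 -> t' < m.+2 ->
  let e := theta_edge m tag i j t in let e' := theta_edge m tag i j t' in
  (e.1 = e'.1 /\ e.2 = e'.2) \/ (e.1 = e'.2 /\ e.2 = e'.1) -> t = t'.
Proof.
move=> + ht ht' /=; rewrite /chords_ok /theta_edge; case: tag => /and3P [h1 h2 h3];
  do ! case: ifP => ?; move=> /= [[? ?]|[? ?]]; lia.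
Qed.

Lemma chords_ok_nonadj m k l : k < l <= m -> ~~ ring_adj m k l -> chords_ok m false k l.
Proof. by rewrite /ring_adj /chords_ok => /andP [? ?] ?; apply/and3P; split; lia. Qed.

Section Theta.
Variables (T : eqType) (h : rel T) (x0 : T) (r : seq T).
Local Notation s := (x0 :: r).
Local Notation m := (size r).

Definition theta_path (tag : bool) (i j : nat) : Prop :=
  [/\ uniq s, chords_ok m tag i j &
      forall t, t < m.+2 ->
        h (nth x0 s (theta_edge m tag i j t).1) (nth x0 s (theta_edge m tag i j t).2)].

Lemma theta_path_of_chords tag i j :
  path h x0 r -> uniq s -> chords_ok m tag i j ->
  h x0 (nth x0 s (if tag then i else m)) ->
  h (nth x0 s (if tag then m else i)) (nth x0 s j) -> theta_path tag i j.
Proof.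
move=> pr ur ok h1 h2; split=> // t tm; rewrite /theta_edge.
case: ifP => [tlt|_]; first exact: (pathP x0 pr).
by case: ifP => /eqP _; case: (tag) h1 h2.
Qed.

End Theta.

Lemma theta_path_mono (T : eqType) (e e' : rel T) x0 r tag i j :
  subrel e e' -> theta_path e x0 r tag i j -> theta_path e' x0 r tag i j.
Proof. by move=> ee [u ok he]; split=> // t /he /ee. Qed.

Section LongestPath.
Variables (T : finType) (h : rel T).
Hypotheses (hsym : symmetric h) (hirr : irreflexive h).

Lemma longest_path_exists x y : h x y ->
  exists x0 r, [/\ path h x0 r, uniq (x0 :: r), 0 < size r &
    forall y0 r', path h y0 r' -> uniq (y0 :: r') -> size r' <= size r].
Proof.
move=> hxy.
pose P n := [exists t : n.+1.-tuple T, path h (thead t) (behead t) && uniq t].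
have bnd n : P n -> n <= #|T|.
  case/existsP => t /andP [_ ut]; rewrite -ltnS -[n.+1](size_tuple t) cardT.
  by apply: ltnW; apply: uniq_leq_size => // z _; rewrite mem_enum.
have xy : x != y by apply: contraTneq hxy => ->; rewrite hirr.
have P1 : P 1 by apply/existsP; exists [tuple x; y]; rewrite /= hxy /= inE xy.
case: (ex_maxnP (ex_intro _ 1 P1) bnd) => m /existsP [t /andP [pt ut]] maxm.
have et : tval t = thead t :: behead t.
  by case: t {pt ut} => [[|a r] //= _]; rewrite /thead (tnth_nth a).
have st : size (behead t) = m by rewrite size_behead size_tuple.
exists (thead t), (behead t); rewrite -et st; split=> //; first exact: maxm.
move=> y0 r' pr' ur'; apply: maxm; apply/existsP.
by exists (in_tuple (y0 :: r')); rewrite /thead (tnth_nth y0) pr' ur'.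
Qed.

Variables (x0 : T) (r : seq T).
Hypotheses (pr : path h x0 r) (ur : uniq (x0 :: r)).
Hypothesis longest : forall y0 r', path h y0 r' -> uniq (y0 :: r') -> size r' <= size r.
Local Notation s := (x0 :: r).
Local Notation m := (size r).

Lemma longest_path_nbr_first z : h x0 z -> z \in s.
Proof.
move=> hz; apply/negPn/negP => zs.
suff: size s <= m by rewrite ltnn.
by apply: (longest (y0 := z)); rewrite /= 1?hsym ?hz ?pr ?zs.
Qed.

Lemma longest_path_nbr_last z : h (last x0 r) z -> z \in s.
Proof.
move=> hz; apply/negPn/negP => zs.
suff: size (rcons r z) <= m by rewrite size_rcons ltnn.
apply: (longest (y0 := x0)); first by rewrite rcons_path pr hz.
by rewrite -rcons_cons rcons_uniq zs.
Qed.

Lemma longest_cycle_closed u w : h (last x0 r) x0 -> u \in s -> h u w -> w \in s.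
Proof.
move=> hl us huw; apply/negPn/negP => ws.
case/(nthP x0): us huw => k ks <- huw.
have rk : rot k s = nth x0 s k :: (drop k.+1 s ++ take k s) by rewrite /rot (drop_nth x0).
suff: size (rot k s) <= m by rewrite size_rot ltnn.
apply: (longest (y0 := w)); last by rewrite cons_uniq mem_rot ws rot_uniq.
have : cycle h (rot k s) by rewrite rot_cycle /= rcons_path pr hl.
by rewrite rk /= rcons_path => /andP [p _]; rewrite hsym huw.
Qed.

Lemma longest_cycle_chord u w : h x0 (last x0 r) -> u \in s -> h u w ->
  ~~ cyc_adj s u w -> exists tag i j, theta_path h x0 r tag i j.
Proof.
move=> hx0m us huw nadj.
have ws : w \in s by apply: longest_cycle_closed huw; rewrite // hsym.
have hm : h x0 (nth x0 s m) by rewrite (nth_last x0 s).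
case/(nthP x0): us huw nadj => k /= km <- huw nadj.
case/(nthP x0): ws huw nadj => l /= lm <- huw nadj.
have {}nadj : ~~ ring_adj m k l by move: nadj; rewrite /cyc_adj !mem_nth // !index_uniq.
have kl : k != l by apply: contraTneq huw => ->; rewrite hirr.
case: (ltngtP k l) => [klt | kgt | keq]; last by rewrite keq eqxx in kl.
- exists false, k, l; apply: theta_path_of_chords => //.
  by apply: chords_ok_nonadj; rewrite // klt -ltnS.
- exists false, l, k; apply: theta_path_of_chords => //; last by rewrite hsym.
  by apply: chords_ok_nonadj; [rewrite kgt -ltnS | rewrite ring_adj_sym].
Qed.

Hypothesis two_nbrs : forall x y, h x y -> exists2 z, z != y & h x z.

Lemma longest_path_theta_or_cycle : 0 < m ->
  (exists tag i j, theta_path h x0 r tag i j)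
  \/ [/\ 3 <= size s, cycle h s & forall u w, u \in s -> h u w -> cyc_adj s u w].
Proof.
move=> m1.
have [z zn1 hz] := two_nbrs (pathP x0 pr 0 m1).
case/(nthP x0): (longest_path_nbr_first hz) => i /= im si.
have i0 : i != 0 by apply: contraTneq hz => i0; rewrite -si i0 /= hirr.
have i1 : i != 1 by apply: contraNneq zn1 => i1; rewrite -si i1 eqxx.
have lastE : nth x0 s m = last x0 r := nth_last x0 s.
have hxm : h (last x0 r) (nth x0 s m.-1).
  rewrite hsym -lastE; case: (size r) m1 (pathP x0 pr m.-1) => // k _ /= -> //.
have [z' zn1' hz'] := two_nbrs hxm.
case/(nthP x0): (longest_path_nbr_last hz') => j /= jm sj.
have jm0 : j != m by apply: contraTneq hz' => jE; rewrite -sj jE lastE hirr.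
have jm1 : j != m.-1 by apply: contraNneq zn1' => jm1; rewrite -sj jm1 eqxx.
have [/andP [/eqP im' /eqP j0] | ij] := boolP ((i == m) && (j == 0)); last first.
  left; exists true, i, j; apply: theta_path_of_chords; rewrite /= ?si ?sj ?lastE //.
  by rewrite /chords_ok ij andbT; apply/andP; split; lia.
have hx0m : h x0 (last x0 r) by rewrite -lastE -im' si.
have [/existsP [u /existsP [w /and3P [us huw nadj]]] | none] :=
  boolP [exists u, exists w, [&& u \in s, h u w & ~~ cyc_adj s u w]].
  by left; apply: longest_cycle_chord huw nadj.
right; split.
- by rewrite /= ltnS -im'; lia.
- by rewrite /= rcons_path pr hsym.
move=> u w us huw; apply/negPn/negP => nadj; move/existsPn: none => /(_ u).
by move/existsPn => /(_ w); rewrite us huw nadj.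
Qed.

End LongestPath.

Lemma theta_path_or_cycle (T : finType) (h : rel T) :
  symmetric h -> irreflexive h -> (forall x y, h x y -> exists2 z, z != y & h x z) ->
  forall x y, h x y ->
  (exists x0 r tag i j, theta_path h x0 r tag i j)
  \/ exists s, [/\ uniq s, 3 <= size s, cycle h s &
                  forall u w, u \in s -> h u w -> cyc_adj s u w].
Proof.
move=> hsym hirr two x y hxy.
have [x0 [r [pr ur r0 longest]]] := longest_path_exists hirr hxy.
have [[tag [i [j th]]] | [s3 cyc closed]] :=
  longest_path_theta_or_cycle hsym hirr pr ur longest two r0.
  by left; exists x0, r, tag, i, j.
by right; exists (x0 :: r).
Qed.

Definition ring_succ (m k : nat) : nat := if k == m then 0 else k.+1.
Definition ring_pred (m k : nat) : nat := if k == 0 then m else k.-1.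

Lemma ring_adj_succ_pred m k l : 2 <= m -> k <= m -> l <= m ->
  ring_adj m k l -> l = ring_succ m k \/ l = ring_pred m k.
Proof.
rewrite /ring_adj /ring_succ /ring_pred => m2 km lm adj.
by case: eqP => ?; case: eqP => ?; lia.
Qed.

Lemma mem_of_card2_subset (T : finType) (S : {set T}) a b :
  #|S| = 2 -> S \subset [set a; b] -> a \in S /\ b \in S.
Proof.
move=> cS sub; have [le eqv] := subset_leqif_cards sub; move: le eqv.
rewrite cS cards2; case: (a != b) => // _ /esym /eqP ->.
by rewrite !inE !eqxx orbT.
Qed.

Section Bipartite.
Variables n1 n2 : nat.
Local Notation T := (bvert n1 n2).
Implicit Types (E C : {set 'I_n1 * 'I_n2}) (x y : T).

Lemma badj_sym E : symmetric (badj E).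
Proof. by move=> [i|j] [i'|j']. Qed.

Lemma badj_irr E : irreflexive (badj E).
Proof. by case. Qed.

Lemma badj_subset E E' x y : E \subset E' -> badj E x y -> badj E' x y.
Proof. by move=> /fintype.subsetP sub; case: x; case: y => //= ? ? /sub. Qed.

Lemma is_cycle_two_nbrs E C x : is_cycle E C -> incident C x ->
  exists z1 z2, [/\ z1 != z2, badj C x z1 & badj C x z2].
Proof.
case/and4P => _ _ /forallP deg2 _ ix.
have /cards2P [z1 [z2 [z12 nbrs]]] := implyP (deg2 x) ix.
have nbr z : z \in [set z1; z2] -> badj C x z by rewrite -nbrs inE.
by exists z1, z2; rewrite !nbr // !inE eqxx ?orbT.
Qed.

Lemma is_cycle_connect E C x y : is_cycle E C -> incident C x -> incident C y ->
  connect (badj C) x y.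
Proof.
by case/and4P => _ _ _ /forallP conn ix iy; rewrite (implyP (implyP (forallP (conn x) y) ix)).
Qed.

Section CycleOfSeq.
Variables (E C : {set 'I_n1 * 'I_n2}) (x0 : T) (r : seq T).
Hypotheses (cyC : is_cycle E C) (ur : uniq (x0 :: r)) (r2 : 2 <= size r).
Hypothesis C_cyc_adj : subrel (badj C) (cyc_adj (x0 :: r)).
Local Notation s := (x0 :: r).
Local Notation m := (size r).
Local Notation sv k := (nth x0 s k).

Lemma cyc_adj_nth k w : k <= m -> cyc_adj s (sv k) w ->
  w = sv (ring_succ m k) \/ w = sv (ring_pred m k).
Proof.
move=> km /and3P [_ ws]; rewrite index_uniq // => adj.
have lm : index w s <= m by rewrite -ltnS index_mem.
rewrite -(nth_index x0 ws).
by case: (ring_adj_succ_pred r2 km lm adj) => ->; [left | right].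
Qed.

Lemma incident_cycle_nbrs k : k <= m -> incident C (sv k) ->
  badj C (sv k) (sv (ring_succ m k)) /\ badj C (sv k) (sv (ring_pred m k)).
Proof.
move=> km ik; case/and4P: cyC => _ _ /forallP deg2 _.
have /eqP c2 := implyP (deg2 (sv k)) ik.
have := mem_of_card2_subset (a := sv (ring_succ m k)) (b := sv (ring_pred m k)) c2.
rewrite !inE; apply.
apply/fintype.subsetP => y; rewrite !inE => /C_cyc_adj /(cyc_adj_nth km) [->|->];
  by rewrite eqxx ?orbT.
Qed.

Lemma incident_cycle_all k : k <= m -> incident C (sv k).
Proof.
have succ_le k' : k' <= m -> ring_succ m k' <= m by rewrite /ring_succ; case: eqP => //; lia.
have step k' : k' <= m -> incident C (sv k') -> incident C (sv (ring_succ m k')).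
  move=> k'm ik; have [hs _] := incident_cycle_nbrs k'm ik.
  by apply/existsP; exists (sv k'); rewrite badj_sym.
have up t k' : k' + t <= m -> incident C (sv k') -> incident C (sv (k' + t)).
  elim: t => [|t IH] ktm ik; first by rewrite addn0.
  have := step (k' + t) ltac:(lia) (IH ltac:(lia) ik).
  by rewrite /ring_succ; case: eqP => [?|_]; [lia | rewrite addnS].
have [k0 k0m ik0] : exists2 k0, k0 <= m & incident C (sv k0).
  case/and4P: cyC => _ /set0Pn [[i j] eC] _ _.
  have /C_cyc_adj /and3P [ins _ _] : badj C (inl i) (inr j) by [].
  exists (index (inl i : T) s); first by rewrite -ltnS index_mem.
  by rewrite nth_index //; apply/existsP; exists (inr j).
have im : incident C (sv m) by have := up (m - k0) k0 ltac:(lia) ik0; rewrite subnKC.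
have i0 : incident C (sv 0) by have := step m (leqnn m) im; rewrite /ring_succ eqxx.
by move=> km; have := up k 0 km i0.
Qed.

Lemma cyc_adj_cycle_edges : subrel (cyc_adj s) (badj C).
Proof.
move=> u w adj; have us : u \in s by case/and3P: adj.
have km : index u s <= m by rewrite -ltnS index_mem.
move: adj; rewrite -(nth_index x0 us) => adj.
have [hs hp] := incident_cycle_nbrs km (incident_cycle_all km).
by case: (cyc_adj_nth km adj) => ->.
Qed.

End CycleOfSeq.
End Bipartite.

Section TwoCycles.
Variables (n1 n2 : nat) (E C1 C2 : {set 'I_n1 * 'I_n2}).
Local Notation T := (bvert n1 n2).
Hypotheses (cy1 : is_cycle E C1) (cy2 : is_cycle E C2).
Variables (a b : T) (q : seq T).
Hypotheses (ia : incident C1 a) (ib : incident C2 b).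
Hypotheses (pq : path (badj E) a q) (uq : uniq (a :: q)) (eb : last a q = b).

Local Notation qv t := (nth a (a :: q) t).

Definition path_edge (x y : T) : bool := [exists t : 'I_(size q),
  ((qv t == x) && (qv t.+1 == y)) || ((qv t == y) && (qv t.+1 == x))].

Definition union_graph (x y : T) : bool := [|| badj C1 x y, badj C2 x y | path_edge x y].
Local Notation h := union_graph.

Let path_edge_step t : t < size q -> path_edge (qv t) (qv t.+1).
Proof. by move=> tq; apply/existsP; exists (Ordinal tq); rewrite !eqxx. Qed.

Let path_last : nth a (a :: q) (size q) = b.
Proof. by rewrite -eb; exact: (nth_last a (a :: q)). Qed.

Lemma union_sym : symmetric h.
Proof.
have qsym : symmetric path_edge.
  by move=> x y; apply/existsP/existsP => -[t ht]; exists t; rewrite orbC.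
by move=> x y; rewrite /union_graph qsym !(badj_sym _ x).
Qed.

Lemma union_sub : subrel h (badj E).
Proof.
case/and4P: cy1 => C1E _ _ _; case/and4P: cy2 => C2E _ _ _.
move=> x y /or3P [|| /existsP [t]]; [exact: badj_subset C1E | exact: badj_subset C2E |].
have qt : badj E (qv t) (qv t.+1) by apply: (pathP a pq).
by case/orP => /andP [/eqP <- /eqP <-]; rewrite // badj_sym.
Qed.

Lemma union_graph_C1 : subrel (badj C1) h.
Proof. by move=> u w huw; rewrite /union_graph huw. Qed.

Lemma union_graph_C2 : subrel (badj C2) h.
Proof. by move=> u w huw; rewrite /union_graph huw orbT. Qed.

Lemma union_irr : irreflexive h.
Proof. by move=> x; apply/negP => /union_sub; rewrite badj_irr. Qed.

Let cycle_nbrs C x : is_cycle E C -> incident C x -> subrel (badj C) h ->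
  exists z1 z2, [/\ z1 != z2, h x z1 & h x z2].
Proof.
move=> cy ix sub; have [z1 [z2 [z12 h1 h2]]] := is_cycle_two_nbrs cy ix.
by exists z1, z2; split; rewrite // sub.
Qed.

Lemma union_two_nbrs x y : h x y -> exists2 z, z != y & h x z.
Proof.
move=> hxy; suff [z1 [z2 [z12 h1 h2]]] : exists z1 z2, [/\ z1 != z2, h x z1 & h x z2].
  by have [ey|] := eqVneq z1 y; [exists z2; rewrite // -ey eq_sym | exists z1].
case/or3P: hxy => [hxy | hxy | /existsP [t ht]].
- by apply: cycle_nbrs cy1 _ union_graph_C1; apply/existsP; exists y.
- by apply: cycle_nbrs cy2 _ union_graph_C2; apply/existsP; exists y.
have [k kq ->] : exists2 k, k <= size q & x = qv k.
  case/orP: ht => /andP [/eqP e1 /eqP e2]; first by exists t; rewrite ?e1 // ltnW.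
  by exists t.+1; rewrite ?e2.
clear t ht.
have [-> | k0] := posnP k; first exact: cycle_nbrs cy1 ia union_graph_C1.
have [-> | kl] := eqVneq k (size q).
  by rewrite path_last; exact: cycle_nbrs cy2 ib union_graph_C2.
have k1 : k.-1 < (size q).+1 by lia.
have k2 : k.+1 < (size q).+1 by lia.
exists (qv k.-1), (qv k.+1); split.
- by rewrite nth_uniq //; lia.
- have e : path_edge (qv k.-1) (qv k) by rewrite -{2}(prednK k0) path_edge_step //; lia.
  by rewrite union_sym /union_graph e !orbT.
- by rewrite /union_graph path_edge_step ?orbT //; lia.
Qed.

Lemma union_connected x x' y y' : h x x' -> h y y' -> connect h x y.
Proof.
have hcsym := sym_connect_sym union_sym.
have qpath t : t <= size q -> connect h a (qv t).
  elim: t => [|t IH] tq; first exact: connect0.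
  by apply: connect_trans (IH (ltnW tq)) (connect1 _); rewrite /union_graph path_edge_step ?orbT.
have cab : connect h a b by rewrite -path_last qpath.
have from_a u w : h u w -> connect h a u.
  case/or3P => [huw | huw | /existsP [t /orP [/andP [/eqP <- _] | /andP [_ /eqP <-]]]].
  - apply: (connect_sub (e := badj C1)) => [v v' /union_graph_C1 /connect1 // |].
    by apply: is_cycle_connect cy1 ia _; apply/existsP; exists w.
  - apply: connect_trans cab (connect_sub (e := badj C2) _ _).
      by move=> v v' /union_graph_C2 /connect1.
    by apply: is_cycle_connect cy2 ib _; apply/existsP; exists w.
  - exact/qpath/ltnW.
  - exact: qpath.
by move=> hx hy; apply: connect_trans (from_a _ _ hy); rewrite hcsym (from_a _ _ hx).
Qed.

Lemma two_cycles_theta : C1 != C2 ->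
  exists x0 r tag i j, theta_path (badj E) x0 r tag i j.
Proof.
move=> C12.
have [x0 hx0] : exists x0, h a x0 by case/existsP: ia => y /union_graph_C1 hy; exists y.
have [[y0 [r [tag [i [j th]]]]] | [s [us s3 cyc closed]]] :=
  theta_path_or_cycle union_sym union_irr union_two_nbrs hx0.
  by exists y0, r, tag, i, j; apply: theta_path_mono th; exact: union_sub.
have [u0 [w0 /andP [u0s hu0]]] : exists u0 w0, (u0 \in s) && h u0 w0.
  case: s {us closed} s3 cyc => [|u0 [|w0 r]] //= _ /andP [hu _].
  by exists u0, w0; rewrite inE eqxx.
have cl : fingraph.closed h (mem s).
  move=> x y hxy; apply/idP/idP => [xs | ys]; first by case/and3P: (closed _ _ xs hxy).
  by rewrite union_sym in hxy; case/and3P: (closed _ _ ys hxy).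
have all_adj : subrel h (cyc_adj s).
  move=> u w huw; apply: closed => //.
  by rewrite -(closed_connect cl (union_connected hu0 huw)).
case: s us s3 cyc closed all_adj {u0s cl} => [|x1 r] // us s3 _ _ all_adj.
have cycle_edgesE C : is_cycle E C -> subrel (badj C) h ->
    forall i j, ((i, j) \in C) = cyc_adj (x1 :: r) (inl i) (inr j).
  move=> cy sub i j; apply/idP/idP => [e | adj]; first by apply/all_adj/sub; exact: e.
  exact: (cyc_adj_cycle_edges cy us s3 (fun u w huw => all_adj u w (sub u w huw)) adj).
case/negP: C12; apply/eqP/setP => -[i j].
by rewrite (cycle_edgesE C1 cy1 union_graph_C1) (cycle_edgesE C2 cy2 union_graph_C2).
Qed.

End TwoCycles.

Lemma complex_component_theta n1 n2 (E : {set 'I_n1 * 'I_n2}) :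
  has_complex_component E -> exists x0 r tag i j, theta_path (badj E) x0 r tag i j.
Proof.
case/existsP => v /existsP [C1 /existsP [C2 /and5P [C12 cy1 cy2 comp1 comp2]]].
have [[i1 j1] e1] : exists e, e \in C1 by case/and4P: (cy1) => _ /set0Pn.
have [[i2 j2] e2] : exists e, e \in C2 by case/and4P: (cy2) => _ /set0Pn.
have ia : incident C1 (inl i1) by apply/existsP; exists (inr j1).
have ib : incident C2 (inl i2) by apply/existsP; exists (inr j2).
have : connect (badj E) (inl i1) (inl i2).
  have va := implyP (forallP comp1 (i1, j1)) e1.
  have vb := implyP (forallP comp2 (i2, j2)) e2.
  by apply: connect_trans vb; rewrite (sym_connect_sym (@badj_sym _ _ E)).
case/connectP => p pp; case: (shortenP pp) => q pq uq _ eb.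
exact: (two_cycles_theta cy1 cy2 ia ib pq uq (esym eb) C12).
Qed.

Definition nleft (m : nat) (b : bool) : nat := if b then (m.+2)./2 else (m.+1)./2.
Definition nright (m : nat) (b : bool) : nat := if b then (m.+1)./2 else (m.+2)./2.

Lemma nleft_add_nright m b : nleft m b + nright m b = m.+1.
Proof. by rewrite /nleft /nright -!divn2; case: b; lia. Qed.

Lemma nright_le_nleft m b : nright m b <= (nleft m b).+1.
Proof. by rewrite /nleft /nright -!divn2; case: b; lia. Qed.

Lemma unbalanced_pow_le n1 n2 a c : n1 <= n2 -> c <= a.+1 ->
  (n1 ^ a * n2 ^ c) ^ 2 * n1 ^ 2 <= (n1 * n2) ^ (a + c).+1.
Proof.
move=> n12 ca; set e := a.+1 - c.
rewrite !expnMn -!expnM mulnAC -expnD.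
rewrite (_ : a * 2 + 2 = (a + c).+1 + e) /e; last by lia.
rewrite {3}(_ : (a + c).+1 = c * 2 + e) /e; last by lia.
rewrite !expnD -mulnA leq_mul2l [n2 ^ _ * _]mulnC leq_mul2r.
by case: (a.+1 - c) => [|k]; rewrite ?leqnn ?orbT // leq_exp2r // n12 !orbT.
Qed.

Lemma half_lt_nside k m (o : bool) : odd k = o -> k <= m ->
  k./2 < (if o then (m.+1)./2 else (m.+2)./2).
Proof.
move=> ok km; have := odd_double_half k; rewrite ok -muln2 -!divn2.
by case: o ok => _ /= hk; lia.
Qed.

Section Encoding.
Variables (n1 n2 : nat) (i0 : 'I_n1) (j0 : 'I_n2).
Local Notation T := (bvert n1 n2).

Definition is_left (x : T) : bool := if x is inl _ then true else false.

Lemma badj_is_left E x y : badj E x y -> is_left y = ~~ is_left x.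
Proof. by case: x; case: y. Qed.

Lemma theta_path_alternates E x0 r tag i j : theta_path (badj E) x0 r tag i j ->
  forall k, k <= size r -> is_left (nth x0 (x0 :: r) k) = (is_left x0 == ~~ odd k).
Proof.
case=> _ _ th; elim=> [|k IH] km; first by rewrite eqb_id.
have := th k (leqW (leqW km)); rewrite /theta_edge km => /badj_is_left ->.
by rewrite IH ?(ltnW km) //=; case: (is_left x0); case: (odd k).
Qed.

Definition code_vertex (b : bool) (t1 : seq 'I_n1) (t2 : seq 'I_n2) (k : nat) : T :=
  if b == ~~ odd k then inl (nth i0 t1 k./2) else inr (nth j0 t2 k./2).

Lemma code_vertex_exists b x0 r :
  (forall k, k <= size r -> is_left (nth x0 (x0 :: r) k) = (b == ~~ odd k)) ->
  exists (t1 : (nleft (size r) b).-tuple 'I_n1) (t2 : (nright (size r) b).-tuple 'I_n2),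
    forall k, k <= size r -> code_vertex b t1 t2 k = nth x0 (x0 :: r) k.
Proof.
move=> alt; set s := x0 :: r; set m := size r.
pose lval (x : T) := if x is inl i then i else i0.
pose rval (x : T) := if x is inr j then j else j0.
pose L1 := [seq lval (nth x0 s (~~ b + k.*2)) | k <- iota 0 (nleft m b)].
pose L2 := [seq rval (nth x0 s (b + k.*2)) | k <- iota 0 (nright m b)].
have sz1 : size L1 == nleft m b by rewrite size_map size_iota.
have sz2 : size L2 == nright m b by rewrite size_map size_iota.
exists (Tuple sz1), (Tuple sz2) => k km; rewrite /code_vertex.
have hk := odd_double_half k; have := alt k km.
case: ifP => side /=.
- have ob : odd k = ~~ b by move/eqP: side => ->; rewrite negbK.
  have kb : k./2 < nleft m b by have := half_lt_nside ob km; rewrite /nleft; case: (b).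
  rewrite (nth_map 0) ?size_iota // nth_iota // add0n -ob hk.
  by case: (nth x0 s k).
- have ob : odd k = b by move/negbT: side; case: (b); case: (odd k).
  have kb : k./2 < nright m b by have := half_lt_nside ob km; rewrite /nright; case: (b).
  rewrite (nth_map 0) ?size_iota // nth_iota // add0n -ob hk.
  by case: (nth x0 s k).
Qed.

Definition edge_of (x y : T) : option ('I_n1 * 'I_n2) :=
  match x, y with
  | inl i, inr j | inr j, inl i => Some (i, j)
  | _, _ => None
  end.

Lemma edge_of_badj E x y : badj E x y -> exists2 e, edge_of x y = Some e & e \in E.
Proof. by case: x => ?; case: y => ? //= ?; eexists. Qed.

Lemma edge_of_inj x y x' y' e : edge_of x y = Some e -> edge_of x' y' = Some e ->
  (x = x' /\ y = y') \/ (x = y' /\ y = x').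
Proof.
by case: x => ?; case: y => ? //=; case: x' => ?; case: y' => ? //= [<-] [-> ->]; auto.
Qed.

(* The side-1 and side-2 vertices of a theta path in path order, with its chord
   data; [b] tells whether the path starts on side 1. *)
Definition theta_code (m : nat) (b : bool) : finType :=
  ((nleft m b).-tuple 'I_n1 * (nright m b).-tuple 'I_n2 * (bool * ('I_m.+1 * 'I_m.+1)))%type.

Definition code_edge m b (c : theta_code m b) (t : nat) : option ('I_n1 * 'I_n2) :=
  let: (t1, t2, (tag, (i, j))) := c in
  let: (k, l) := theta_edge m tag i j t in
  edge_of (code_vertex b t1 t2 k) (code_vertex b t1 t2 l).

Definition code_edges m b (c : theta_code m b) : {set 'I_n1 * 'I_n2} :=
  [set e | [exists t : 'I_m.+2, code_edge c t == Some e]].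

Definition has_theta_code m b (E : {set 'I_n1 * 'I_n2}) : bool :=
  [exists c : theta_code m b, (code_edges c \subset E) && (m.+2 <= #|code_edges c|)].

Lemma theta_path_code E x0 r tag i j : theta_path (badj E) x0 r tag i j ->
  exists b (c : theta_code (size r) b),
    code_edges c \subset E /\ (size r).+2 <= #|code_edges c|.
Proof.
move=> th; have [ur ok he] := th; set m := size r in ok he *; set s := x0 :: r in ur he.
have [t1 [t2 vE]] := code_vertex_exists (theta_path_alternates th).
have [im jm] : i < m.+1 /\ j < m.+1 by rewrite !ltnS; exact: chords_ok_le ok.
pose c : theta_code m (is_left x0) := (t1, t2, (tag, (Ordinal im, Ordinal jm))).
have codeE t : t < m.+2 -> code_edge c t =
    edge_of (nth x0 s (theta_edge m tag i j t).1) (nth x0 s (theta_edge m tag i j t).2).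
  move=> tm; have := theta_edge_le ok tm; rewrite /code_edge /=.
  by case: (theta_edge m tag i j t) => k l /= [km lm]; rewrite !vE.
pose g (t : 'I_m.+2) := odflt (i0, j0) (code_edge c t).
have gE (t : 'I_m.+2) : code_edge c t = Some (g t) /\ g t \in E.
  have [e ce eE] : exists2 e, code_edge c t = Some e & e \in E.
    by rewrite codeE //; apply/edge_of_badj/he.
  by rewrite /g ce.
exists (is_left x0), c; split.
  apply/fintype.subsetP => e; rewrite inE => /existsP [t /eqP ct].
  by have [] := gE t; rewrite ct => -[->].
have nth_inj a a' : a <= m -> a' <= m -> nth x0 s a = nth x0 s a' -> a = a'.
  by move=> am a'm e; apply/eqP; rewrite -(nth_uniq x0 _ _ ur) ?ltnS // e.
have ginj : injective g.
  move=> t t' gt; apply/val_inj/(theta_edge_inj ok (ltn_ord t) (ltn_ord t')) => /=.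
  have [+ _] := gE t; have [+ _] := gE t'; rewrite !codeE // -gt => H2 H1.
  have [b1 b2] := theta_edge_le ok (ltn_ord t); have [b3 b4] := theta_edge_le ok (ltn_ord t').
  by case: (edge_of_inj H1 H2) => -[e1 e2]; [left | right]; split; apply: nth_inj.
rewrite -[m.+2]card_ord -cardsT -(card_imset _ ginj); apply/subset_leq_card/fintype.subsetP.
by move=> e /imsetP [t _ ->]; rewrite inE; apply/existsP; exists t; have [-> _] := gE t.
Qed.

End Encoding.

Lemma complex_component_code n1 n2 (i0 : 'I_n1) (j0 : 'I_n2) (E : {set 'I_n1 * 'I_n2}) :
  has_complex_component E -> exists (m : 'I_(n1 + n2)) b, has_theta_code i0 j0 m b E.
Proof.
case/complex_component_theta => x0 [r [tag [i [j th]]]].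
have [b [c [cE cc]]] := theta_path_code i0 j0 th.
have mlt : size r < n1 + n2.
  have [ur _ _] := th; have := card_sum 'I_n1 'I_n2; rewrite !card_ord => <-.
  by rewrite cardT; apply: (uniq_leq_size ur) => z _; rewrite mem_enum.
by exists (Ordinal mlt), b; apply/existsP; exists c; rewrite cE.
Qed.

Local Open Scope ring_scope.

Section RandomSubset.
Variables (R : numDomainType) (T : finType) (p : R).

Definition subset_weight (E : {set T}) : R := p ^+ #|E| * (1 - p) ^+ (#|T| - #|E|).

Definition subset_prob (A : pred {set T}) : R := \sum_(E | A E) subset_weight E.

Hypotheses (p0 : 0 <= p) (p1 : p <= 1).

Lemma subset_weight_ge0 E : 0 <= subset_weight E.
Proof. by rewrite mulr_ge0 ?exprn_ge0 // subr_ge0. Qed.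

Lemma subset_prob_ge0 A : 0 <= subset_prob A.
Proof. by apply: sumr_ge0 => E _; exact: subset_weight_ge0. Qed.

Lemma subset_prob_union_bound (J : finType) (P : pred J) (A : pred {set T})
    (B : J -> pred {set T}) :
  (forall E, A E -> exists2 j, P j & B j E) ->
  subset_prob A <= \sum_(j | P j) subset_prob (B j).
Proof.
move=> cover; have wB0 j E : 0 <= if B j E then subset_weight E else 0.
  by case: ifP => // _; exact: subset_weight_ge0.
under [X in _ <= X]eq_bigr do rewrite /subset_prob big_mkcond.
rewrite exchange_big /= /subset_prob big_mkcond /=; apply: ler_sum => E _.
case: ifP => [/cover [j Pj BjE] | _]; last exact: sumr_ge0.
by rewrite (bigD1 j) //= BjE lerDl sumr_ge0.
Qed.

Lemma subset_prob_supset (F : {set T}) :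
  subset_prob (fun E => F \subset E) = p ^+ #|F|.
Proof.
pose G (x : T) (b : bool) : R := if b then p else if x \in F then 0 else 1 - p.
have <- : \prod_(x : T) \sum_(b : bool) G x b = p ^+ #|F|.
  rewrite (eq_bigr (fun x => if x \in F then p else 1)); last first.
    by move=> x _; rewrite big_bool /G /=; case: (x \in F); rewrite ?addr0 // addrC subrK.
  by rewrite -big_mkcond /= prodr_const.
rewrite bigA_distr_bigA /= (reindex (fun E : {set T} => [ffun x => x \in E])) /=; last first.
  exists (fun f : {ffun T -> bool} => [set x | f x]) => [E _ | f _].
  - by apply/setP => x; rewrite inE ffunE.
  - by apply/ffunP => x; rewrite !ffunE inE.
rewrite /subset_prob big_mkcond /=; apply: eq_bigr => E _.
under eq_bigr do rewrite ffunE.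
case: ifP => FE.
- rewrite (bigID (mem E)) /= /subset_weight -(cardC E) addKn.
  rewrite -!prodr_const; congr (_ * _); apply: eq_bigr => x xE; rewrite /G ?xE //.
  rewrite (negbTE xE); case: ifP => // xF.
  by move/fintype.subsetP: FE => /(_ x xF); rewrite (negbTE xE).
- have /subsetPn [x xF xE] : ~~ (F \subset E) by rewrite FE.
  by rewrite (bigD1 x) //= /G (negbTE xE) xF mul0r.
Qed.

End RandomSubset.

Lemma sum_sq_geometric_bounded (R : realFieldType) (d : R) : 0 <= d -> d < 1 ->
  exists K, forall N, \sum_(m < N) (m.+1)%:R ^+ 2 * d ^+ m <= K.
Proof.
move=> d0 d1; have hd : 0 < 1 - d by rewrite subr_gt0.
pose al := (1 - d)^-1; pose be := 2 * al * d / (1 - d); pose ga := (al + be) * d / (1 - d).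
pose g (N : nat) : R := al * N.+1%:R ^+ 2 + be * N.+1%:R + ga.
(* [g] solves [g N - d * g N.+1 = N.+1 ^ 2], so the partial sums telescope. *)
have g_step N : g N - d * g N.+1 = N.+1%:R ^+ 2.
  have hd' : 1 - d != 0 by rewrite gt_eqF.
  by rewrite /g /ga /be /al -[N.+2%:R]natr1; field.
have g_ge0 N : 0 <= g N.
  have al0 : 0 <= al by rewrite invr_ge0 ltW.
  have be0 : 0 <= be by rewrite !mulr_ge0 ?ler0n // invr_ge0 ltW.
  have ga0 : 0 <= ga by rewrite !mulr_ge0 ?addr_ge0 // invr_ge0 ltW.
  by rewrite /g !addr_ge0 // mulr_ge0 // exprn_ge0.
exists (g 0) => N.
suff <- : \sum_(m < N) m.+1%:R ^+ 2 * d ^+ m + d ^+ N * g N = g 0.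
  by rewrite lerDl mulr_ge0 ?exprn_ge0.
elim: N => [|N IH]; first by rewrite big_ord0 add0r expr0 mul1r.
by rewrite big_ord_recr /= -IH -g_step exprSr; ring.
Qed.

Lemma theta_code_weight_le (R : rcfType) n1 n2 (d : R) m b :
  (0 < n1)%N -> (n1 <= n2)%N -> 0 <= d ->
  (d / Num.sqrt (n1 * n2)%:R) ^+ m.+2 * (n1 ^ nleft m b * n2 ^ nright m b)%:R
    <= d ^+ m.+2 / n1%:R.
Proof.
move=> n1p n12 d0.
have := unbalanced_pow_le n12 (nright_le_nleft m b); rewrite nleft_add_nright => key.
set x : R := (n1 * n2)%:R; set N : R := (n1 ^ _ * n2 ^ _)%:R.
have x0 : 0 < x by rewrite ltr0n muln_gt0 n1p (leq_trans n1p n12).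
have n10 : 0 < n1%:R :> R by rewrite ltr0n.
rewrite -(ler_pXn2r (n := 2)) // ?nnegrE; last 2 first.
- by rewrite mulr_ge0 ?exprn_ge0 ?divr_ge0 ?sqrtr_ge0 ?ler0n.
- by rewrite divr_ge0 ?exprn_ge0 ?ler0n.
rewrite exprMn -exprM !expr_div_n -exprM (mulnC m.+2 2%N) (exprM (Num.sqrt x)).
rewrite (sqr_sqrtr (ltW x0)) -mulrA; apply: ler_wpM2l; first exact: exprn_ge0.
rewrite mulrC ler_pdivrMr ?exprn_gt0 // mulrC ler_pdivlMr ?exprn_gt0 //.
by rewrite /N /x -!natrX -natrM ler_nat.
Qed.

Lemma card_theta_code n1 n2 m b :
  #|theta_code n1 n2 m b| = (n1 ^ nleft m b * n2 ^ nright m b * (2 * (m.+1 * m.+1)))%N.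
Proof. by rewrite !card_prod !card_tuple !card_ord card_bool mulnA. Qed.

Lemma prob_Gnnp_subset_prob (R : realType) n1 n2 (p : R) (A : pred {set 'I_n1 * 'I_n2}) :
  prob_Gnnp p A = subset_prob p A.
Proof. by rewrite /subset_prob /subset_weight card_prod !card_ord. Qed.

Lemma edge_prob_ge0_le1 (R : rcfType) n1 n2 (d : R) :
  (0 < n1)%N -> (n1 <= n2)%N -> 0 <= d -> d <= 1 ->
  0 <= d / Num.sqrt (n1 * n2)%:R <= 1.
Proof.
move=> n1p n12 d0 d1.
have s1 : 1 <= Num.sqrt (n1 * n2)%:R :> R.
  by rewrite -[X in X <= _]sqrtr1 ler_sqrt ?ler0n // ler1n muln_gt0 n1p (leq_trans n1p n12).
rewrite divr_ge0 ?sqrtr_ge0 //= ler_pdivrMr ?(lt_le_trans ltr01 s1) // mul1r.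
exact: le_trans d1 s1.
Qed.

Section ProbabilityBound.
Variables (R : realType) (n1 n2 : nat) (d : R).
Hypotheses (n1p : (0 < n1)%N) (n12 : (n1 <= n2)%N) (d0 : 0 <= d) (d1 : d <= 1).
Local Notation p := (d / Num.sqrt (n1 * n2)%:R).
Let i0 : 'I_n1 := Ordinal n1p.
Let j0 : 'I_n2 := Ordinal (leq_trans n1p n12).

Let p0 : 0 <= p. Proof. by case/andP: (edge_prob_ge0_le1 n1p n12 d0 d1). Qed.
Let p1 : p <= 1. Proof. by case/andP: (edge_prob_ge0_le1 n1p n12 d0 d1). Qed.

Lemma prob_complex_ge0 : 0 <= prob_Gnnp p (@has_complex_component n1 n2).
Proof. by rewrite prob_Gnnp_subset_prob subset_prob_ge0. Qed.

Lemma prob_theta_code_le m b :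
  subset_prob p (has_theta_code i0 j0 m b) <= 2 / n1%:R * (m.+1%:R ^+ 2 * d ^+ m).
Proof.
apply: le_trans (subset_prob_union_bound p0 p1
  (P := fun c : theta_code n1 n2 m b => (m.+2 <= #|code_edges i0 j0 c|)%N)
  (B := fun c E => code_edges i0 j0 c \subset E) _) _.
  by move=> E /existsP [c /andP [cE cc]]; exists c.
under eq_bigr do rewrite subset_prob_supset.
apply: le_trans (_ : _ <= \sum_(c : theta_code n1 n2 m b) p ^+ m.+2) _.
  rewrite [X in X <= _]big_mkcond; apply: ler_sum => c _.
  by case: ifP => cc; [exact: ler_wiXn2l | exact: exprn_ge0].
rewrite sumr_const card_theta_code -[_ *+ _]mulr_natr [(_ * (2 * _))%:R]natrM mulrA.
apply: le_trans (ler_wpM2r (ler0n _ _) (theta_code_weight_le m b n1p n12 d0)) _.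
have dm : d ^+ m.+2 <= d ^+ m by apply: ler_wiXn2l; rewrite // leqW.
pose c : R := 2 / n1%:R * m.+1%:R ^+ 2.
have -> : d ^+ m.+2 / n1%:R * (2 * (m.+1 * m.+1))%:R = c * d ^+ m.+2.
  by rewrite /c !natrM; ring.
have -> : 2 / n1%:R * (m.+1%:R ^+ 2 * d ^+ m) = c * d ^+ m by rewrite /c mulrA.
by apply: ler_wpM2l => //; rewrite mulr_ge0 ?divr_ge0 ?exprn_ge0 ?ler0n.
Qed.

Lemma prob_complex_le (K : R) : (forall N, \sum_(m < N) (m.+1)%:R ^+ 2 * d ^+ m <= K) ->
  prob_Gnnp p (@has_complex_component n1 n2) <= 4 * K / n1%:R.
Proof.
move=> sumK; rewrite prob_Gnnp_subset_prob.
apply: le_trans (subset_prob_union_bound p0 p1 (P := fun _ => true)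
  (B := fun mb : 'I_(n1 + n2) * bool => has_theta_code i0 j0 mb.1 mb.2) _) _.
  by move=> E /(complex_component_code i0 j0) [m [b mb]]; exists (m, b).
rewrite -(pair_bigA _ (fun (m : 'I_(n1 + n2)) b => subset_prob p (has_theta_code i0 j0 m b))).
apply: le_trans (_ : _ <= \sum_(m < n1 + n2) 4 / n1%:R * (m.+1%:R ^+ 2 * d ^+ m)) _.
  apply: ler_sum => m _; rewrite big_bool /=.
  apply: le_trans (lerD (prob_theta_code_le m true) (prob_theta_code_le m false)) _.
  by rewrite -mulrDl -mulrDl -natrD.
rewrite -mulr_sumr mulrAC; apply: ler_wpM2r; first by rewrite invr_ge0 ler0n.
by apply: ler_wpM2l; [exact: ler0n | exact: sumK].
Qed.

End ProbabilityBound.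

Local Open Scope classical_set_scope.
Local Open Scope ring_scope.
Unset Implicit Arguments.

Theorem lemma3p1 (R : realType) (d : R) (n2 : nat -> nat) :
  0 < d -> d < 1 -> (forall n1 : nat, (n1 <= n2 n1)%N) ->
  (fun n1 : nat =>
     prob_Gnnp (d / Num.sqrt ((n1 * n2 n1)%:R))
       (@has_complex_component n1 (n2 n1))) @ \oo --> (0 : R).
Proof.
move=> d0 d1 n12; have [K sumK] := sum_sq_geometric_bounded (ltW d0) d1.
rewrite -cvg_shiftS /=.
apply: (@squeeze_cvgr _ _ _ _ (fun=> 0) (fun n => 4 * K * harmonic n)).
- apply: nearW => n /=.
  rewrite (prob_complex_ge0 (ltn0Sn n) (n12 n.+1) (ltW d0) (ltW d1)) /=.
  exact: (prob_complex_le (ltn0Sn n) (n12 n.+1) (ltW d0) (ltW d1) sumK).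
- exact: cvg_cst.
- by rewrite -(mulr0 (4 * K)); apply: cvgMl_tmp; exact: cvg_harmonic.
Qed.
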